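(* Let $\mathcal{X},\mathcal{Y}$ be finite, $P_X$ a distribution on $\mathcal{X}$, $R\ge0$, and $M=\exp(nR)$. For any joint $n$-type $Q_{\bar X\bar Y}\in\mathcal{P}_n(\mathcal{X}\times\mathcal{Y})$ with $\mathcal{Y}$-marginal $Q_{\bar Y}$, \[ D(Q_{\bar X\bar Y}\|P_XQ_{\bar Y})+\tfrac12\big[R-D(Q_{\bar X\bar Y}\|P_XQ_{\bar Y})\big]_+\le-\frac1n\log\Big(\tfrac12\mathfrak{Y}(M,Q_{\bar X\bar Y})\Big)\le D(Q_{\bar X\bar Y}\|P_XQ_{\bar Y})+\tfrac12\big[R-D(Q_{\bar X\bar Y}\|P_XQ_{\bar Y})\big]_++\kappa_n, \] where $[f]_+=\max\{0,f\}$ and $\kappa_n=\frac{|\mathcal{X}||\mathcal{Y}|}{n}\log(n+1)+\frac1n\log2$.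
   Context: Logs and exps use a common base; $D$ is relative entropy. For $y^n$ of type $Q_{\bar Y}$, let $Q_{\bar X|\bar Y}$ be the conditional type with $Q_{\bar X|\bar Y}Q_{\bar Y}=Q_{\bar X\bar Y}$, let $\mathcal{T}^n_{Q_{\bar X|\bar Y}}(y^n)$ be the set of $x^n$ whose joint empirical distribution with $y^n$ is $Q_{\bar X\bar Y}$, and $p_{Q_{\bar X|\bar Y}}(y^n)=\mathbb{P}[X^n\in\mathcal{T}^n_{Q_{\bar X|\bar Y}}(y^n)]$ with $X^n$ i.i.d. $P_X$ (this depends on $y^n$ only through $Q_{\bar Y}$). Define $\mathfrak{Y}(M,Q_{\bar X\bar Y})=\min\{2p_{Q_{\bar X|\bar Y}}(y^n),\,M^{-1/2}p_{Q_{\bar X|\bar Y}}^{1/2}(y^n)\}$. *)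

From HB Require Import structures.
From mathcomp Require Import all_boot all_order all_algebra.
From mathcomp Require Import boolp classical_sets reals constructive_ereal ereal sequences exp.
Set Implicit Arguments. Unset Strict Implicit. Unset Printing Implicit Defensive.
Import Order.TTheory GRing.Theory Num.Theory.
Local Open Scope ring_scope.

Section Defs.
Context {R : realType}.

Definition is_distr (A : finType) (P : A -> R) : Prop :=
  (forall a, 0 <= P a) /\ \sum_(a : A) P a = 1.

Definition is_ntype (A : finType) (n : nat) (Q : A -> R) : Prop :=
  is_distr Q /\ forall a, exists k : nat, Q a = k%:R / n%:R.

Definition marginalY (X Y : finType) (Q : X * Y -> R) (b : Y) : R :=
  \sum_(a : X) Q (a, b).

Definition emp_type (A : finType) (n : nat) (y : {ffun 'I_n -> A}) (b : A) : R :=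
  #|[set i : 'I_n | y i == b]|%:R / n%:R.

Definition cond_type_class (X Y : finType) (n : nat) (Q : X * Y -> R)
    (y : {ffun 'I_n -> Y}) : {set {ffun 'I_n -> X}} :=
  [set x : {ffun 'I_n -> X} |
     [forall ab : X * Y,
        #|[set i : 'I_n | (x i, y i) == ab]|%:R / n%:R == Q ab]].

(* p_{Q_{X|Y}}(y^n) = P[X^n in T(y^n)], X^n i.i.d. P_X *)
Definition p_cond (X Y : finType) (P : X -> R) (n : nat) (Q : X * Y -> R)
    (y : {ffun 'I_n -> Y}) : R :=
  \sum_(x in cond_type_class Q y) \prod_(i < n) P (x i).

Definition frakY (M p : R) : R :=
  Num.min (2 * p) (M `^ (- 2^-1) * p `^ (2^-1)).

Definition relent (X Y : finType) (Q : X * Y -> R) (P : X -> R) : \bar R :=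
  if [exists ab : X * Y, (0 < Q ab) && (P ab.1 * marginalY Q ab.2 == 0)]
  then +oo%E
  else (\sum_(ab : X * Y | 0 < Q ab)
          Q ab * ln (Q ab / (P ab.1 * marginalY Q ab.2)))%:E.

Definition kappa (X Y : finType) (n : nat) : R :=
  (#|X| * #|Y|)%:R / n%:R * ln (n.+1)%:R + n%:R^-1 * ln 2.

End Defs.

(* Write p := p_cond P Q y as |T_w| * prod_ab P(a)^w(a,b) with the integer
   weights w := n Q, where T_c is the set of x whose joint type with y is c.
   The multinomial identity |T_c| * prod_ab c(a,b)! = prod_b (n Q(b))! shows,
   comparing factorials, that the mass |T_c| * prod_ab w(a,b)^c(a,b) is
   largest for c = w.  Summing the masses over the at most (n+1)^|X||Y|
   classes gives prod_i sum_a w(a, y_i) = prod_ab (n Q(b))^w(a,b), hence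
   exp(-n D) (n+1)^-|X||Y| <= p <= exp(-n D).  Finally
   -ln(frakY/2) = max(-ln p, (n R - ln p)/2 + ln 2), while
   max(D, (R + D)/2) = D + [R - D]_+/2.  If D = +oo then p = 0 and both
   sides are +oo. *)

From HB Require Import structures.
From mathcomp Require Import all_boot all_order all_algebra.
From mathcomp Require Import boolp classical_sets reals constructive_ereal ereal sequences exp.
From mathcomp Require Import zify ring lra.
Import Order.TTheory GRing.Theory Num.Theory.
Set Implicit Arguments. Unset Strict Implicit. Unset Printing Implicit Defensive.

Definition occ (I : finType) (T : eqType) (f : I -> T) (t : T) : nat :=
  #|[set i | f i == t]|.

Lemma occE (I : finType) (T : eqType) (f : I -> T) t : occ f t = \sum_i (f i == t).
Proof.
by rewrite /occ -sum1dep_card big_mkcond; apply: eq_bigr => i _; case: (f i == t).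
Qed.

Lemma occ_ord0 (T : eqType) (f : 'I_0 -> T) t : occ f t = 0.
Proof. by rewrite occE big_ord0. Qed.

Lemma occ_recl (T : eqType) m (f : 'I_m.+1 -> T) t :
  occ f t = (f ord0 == t) + occ (fun j => f (lift ord0 j)) t.
Proof. by rewrite !occE big_ord_recl. Qed.

Lemma prod_occ (R : comPzSemiRingType) (I T : finType) (f : I -> T) (F : T -> R) :
  (\prod_i F (f i) = \prod_t F t ^+ occ f t)%R.
Proof.
rewrite (partition_big f xpredT) //=; apply: eq_bigr => t _.
rewrite (eq_bigr (fun _ => F t)) => [|i /eqP -> //].
by rewrite prodr_const /occ; congr (_ ^+ _)%R; apply: eq_card => i; rewrite inE.
Qed.

Lemma factD_le c d : (c + d)`! <= c`! * (c + d) ^ d.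
Proof.
elim: d => [|d IH]; first by rewrite addn0 muln1.
rewrite addnS factS expnS mulnCA leq_mul2l (leq_trans IH) ?orbT //.
rewrite leq_mul2l; apply/orP; right.
by case: d {IH} => [|d]; rewrite ?expn0 // leq_exp2r.
Qed.

Lemma fact_expn_le_factD n d : n`! * n ^ d <= (n + d)`!.
Proof.
elim: d => [|d IH]; first by rewrite addn0 muln1.
by rewrite addnS factS expnS mulnCA leq_mul // ltnW // ltnS leq_addr.
Qed.

Lemma fact_expn_exchange n c : n`! * n ^ c <= c`! * n ^ n.
Proof.
have [/subnKC <-|/ltnW/subnKC <-] := leqP c n.
  by rewrite expnD mulnCA [leqLHS]mulnC leq_mul2l factD_le orbT.
by rewrite expnD mulnCA [leqRHS]mulnC leq_mul2l fact_expn_le_factD orbT.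
Qed.

Lemma prod_fact_pred (T : finType) (c : T -> nat) t0 : 0 < c t0 ->
  \prod_t (c t)`! = c t0 * \prod_t (c t - (t0 == t))`!.
Proof.
move=> ct0; rewrite (bigD1 t0) //= [in RHS](bigD1 t0) //= eqxx.
case: (c t0) ct0 => [//|k _]; rewrite subSS subn0 factS -mulnA; congr (_ * (_ * _)).
by apply: eq_bigr => t /negbTE t0t; rewrite eq_sym t0t subn0.
Qed.

Section Counting.
Variables X Y : finType.

Definition joint_occ (I : finType) (x : I -> X) (y : I -> Y) : X * Y -> nat :=
  occ (fun i => (x i, y i)).

Lemma sum_joint_occ (I : finType) (x : I -> X) (y : I -> Y) b :
  \sum_a joint_occ x y (a, b) = occ y b.
Proof.
under eq_bigr do rewrite /joint_occ occE.
rewrite occE exchange_big /=; apply: eq_bigr => i _.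
rewrite (bigD1 (x i)) //= big1 ?addn0 => [|a /negbTE xa]; first by rewrite xpair_eqE eqxx.
by rewrite xpair_eqE eq_sym xa.
Qed.

Definition class_size m (y : 'I_m -> Y) (c : X * Y -> nat) : nat :=
  \sum_(x : {ffun 'I_m -> X}) [forall ab, joint_occ x y ab == c ab].

Definition ffun_cons m (a : X) (x : {ffun 'I_m -> X}) : {ffun 'I_m.+1 -> X} :=
  [ffun i => if unlift ord0 i is Some j then x j else a].

Lemma ffun_cons0 m a (x : {ffun 'I_m -> X}) : ffun_cons a x ord0 = a.
Proof. by rewrite ffunE unlift_none. Qed.

Lemma ffun_cons_lift m a (x : {ffun 'I_m -> X}) j : ffun_cons a x (lift ord0 j) = x j.
Proof. by rewrite ffunE liftK. Qed.

Lemma class_size_recl m (y : 'I_m.+1 -> Y) c :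
  class_size y c = \sum_a \sum_(x : {ffun 'I_m -> X})
    [forall ab, ((a, y ord0) == ab) + joint_occ x (fun j => y (lift ord0 j)) ab == c ab].
Proof.
rewrite pair_big /class_size.
rewrite (reindex (fun p : X * {ffun 'I_m -> X} => ffun_cons p.1 p.2)) /=.
  apply: eq_bigr => -[a x] _; apply: congr1; apply: eq_forallb => ab.
  rewrite /joint_occ !occE big_ord_recl /= ffun_cons0.
  by under eq_bigr do rewrite ffun_cons_lift.
exists (fun x : {ffun 'I_m.+1 -> X} => (x ord0, [ffun j => x (lift ord0 j)])).
  move=> [a x] _ /=; rewrite ffun_cons0; congr pair.
  by apply/ffunP => j; rewrite ffunE ffun_cons_lift.
move=> x _; apply/ffunP => i; rewrite ffunE.
by case: unliftP => [j ->|->]; rewrite ?ffunE.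
Qed.

Lemma class_size_shift m (y : 'I_m -> Y) c ab0 :
  \sum_(x : {ffun 'I_m -> X}) [forall ab, (ab0 == ab) + joint_occ x y ab == c ab] =
  if 0 < c ab0 then class_size y (fun ab => c ab - (ab0 == ab)) else 0.
Proof.
case: posnP => [c0|cpos].
  apply: big1 => x _; case: forallP => // /(_ ab0).
  by rewrite eqxx c0 add1n.
apply: eq_bigr => x _; apply: congr1; apply: eq_forallb => ab.
case: (ab0 =P ab) => [<-|_] /=; apply/eqP/eqP; lia.
Qed.

Lemma class_size_multinomial m (y : 'I_m -> Y) c :
  (forall b, \sum_a c (a, b) = occ y b) ->
  class_size y c * \prod_ab (c ab)`! = \prod_b (occ y b)`!.
Proof.
elim: m y c => [|m IH] y c margc.
  have c0 ab : c ab = 0.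
    by apply/eqP; move: (margc ab.2); rewrite occ_ord0 => /eqP;
       rewrite sum_nat_eq0 => /forallP/(_ ab.1); case: ab.
  rewrite big1 => [|ab _]; last by rewrite c0.
  rewrite big1 => [|b _]; last by rewrite occ_ord0.
  rewrite /class_size (eq_bigr (fun _ => 1)) ?sum1_card ?card_ffun ?card_ord //.
  move=> x _; apply/eqP; rewrite eqb1; apply/forallP => ab.
  by rewrite /joint_occ occ_ord0 c0.
set y' := fun j => y (lift ord0 j); set b0 := y ord0.
have first_letter a : (\sum_(x : {ffun 'I_m -> X})
    [forall ab, ((a, b0) == ab) + joint_occ x y' ab == c ab]) * \prod_ab (c ab)`!
    = c (a, b0) * \prod_b (occ y' b)`!.
  rewrite class_size_shift; case: posnP => [-> //|cpos].
  rewrite (prod_fact_pred cpos) mulnCA IH // => b.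
  apply/eqP; rewrite -(eqn_add2l (b0 == b)) -occ_recl -margc.
  have -> : (b0 == b) = \sum_a' ((a, b0) == (a', b)) :> nat.
    rewrite (bigD1 a) //= big1 ?addn0 => [|a' /negbTE aa'].
      by rewrite xpair_eqE eqxx.
    by rewrite xpair_eqE eq_sym aa'.
  rewrite -big_split; apply/eqP/eq_bigr => a' _; apply: subnKC.
  by case: ((a, b0) =P (a', b)) => [<-|].
rewrite class_size_recl -/y' -/b0 big_distrl /=.
under eq_bigr do rewrite first_letter.
rewrite -big_distrl /=.
rewrite margc [in RHS](bigD1 b0) //= !occ_recl -/b0 -/y' eqxx add1n factS -mulnA.
rewrite (bigD1 b0) //=; congr (_ * (_ * _)).
by apply: eq_bigr => b /negbTE bb0; rewrite occ_recl eq_sym bb0.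
Qed.

Lemma class_size_gt0 m (y : 'I_m -> Y) c :
  (forall b, \sum_a c (a, b) = occ y b) -> 0 < class_size y c.
Proof.
move=> /class_size_multinomial cE.
have : 0 < \prod_b (occ y b)`! by rewrite prodn_gt0 // => b; apply: fact_gt0.
by rewrite -cE muln_gt0 => /andP[].
Qed.

Lemma class_size_marginal m (y : 'I_m -> Y) c : 0 < class_size y c ->
  forall b, \sum_a c (a, b) = occ y b.
Proof.
rewrite lt0n sum_nat_eq0 => /forallPn[x /=]; case: forallP => //= cx _ b.
by rewrite -(sum_joint_occ x); apply: eq_bigr => a _; rewrite (eqP (cx _)).
Qed.

Lemma prod_joint_occ (I : finType) (x : I -> X) (y : I -> Y) (w : X * Y -> nat) :
  \prod_i w (x i, y i) = \prod_ab w ab ^ joint_occ x y ab.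
Proof. exact: (prod_occ (fun i => (x i, y i)) w). Qed.

Definition class_mass m (y : 'I_m -> Y) (w c : X * Y -> nat) : nat :=
  class_size y c * \prod_ab w ab ^ c ab.

(* The type class of w is the most likely one under the channel
   (a, b) |-> w (a, b) / occ y b. *)
Lemma class_mass_le_own m (y : 'I_m -> Y) (w c : X * Y -> nat) :
  (forall b, \sum_a w (a, b) = occ y b) -> class_mass y w c <= class_mass y w w.
Proof.
move=> margw; rewrite /class_mass.
have [->//|/class_size_marginal margc] := posnP (class_size y c).
have facts_gt0 : 0 < \prod_ab (c ab)`! * \prod_ab (w ab)`!.
  by rewrite muln_gt0 !prodn_gt0 // => ab; apply: fact_gt0.
rewrite -(leq_pmul2r facts_gt0) [leqLHS]mulnACA [in leqRHS](mulnC (\prod_ab _)).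
rewrite [leqRHS]mulnACA !class_size_multinomial // leq_mul2l -!big_split /=.
rewrite leq_prod ?orbT // => ab _.
by rewrite mulnC [leqRHS]mulnC fact_expn_exchange.
Qed.

Lemma class_mass_le_prod_sum m (y : 'I_m -> Y) (w c : X * Y -> nat) :
  class_mass y w c <= \prod_i \sum_a w (a, y i).
Proof.
rewrite (bigA_distr_bigA (fun i a => w (a, y i))) /class_mass /class_size.
rewrite big_distrl leq_sum //= => x _; case: forallP => [cx|_]; last by rewrite mul0n.
by rewrite mul1n prod_joint_occ leq_prod // => ab _; rewrite (eqP (cx ab)).
Qed.

Lemma prod_sum_le_class_mass m (y : 'I_m -> Y) (w : X * Y -> nat) :
  (forall b, \sum_a w (a, b) = occ y b) ->
  \prod_i \sum_a w (a, y i) <= m.+1 ^ (#|X| * #|Y|) * class_mass y w w.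
Proof.
move=> margw; rewrite (bigA_distr_bigA (fun i a => w (a, y i))) /=.
pose cls (x : {ffun 'I_m -> X}) : {ffun X * Y -> 'I_m.+1} :=
  [ffun ab => inord (joint_occ x y ab)].
have clsE x ab : cls x ab = joint_occ x y ab :> nat.
  by rewrite ffunE inordK // ltnS (leq_trans (max_card _)) ?card_ord.
have -> : m.+1 ^ (#|X| * #|Y|) = #|{ffun X * Y -> 'I_m.+1}|.
  by rewrite card_ffun card_prod card_ord.
rewrite (partition_big cls xpredT) //= -sum1_card big_distrl leq_sum //= => c _.
rewrite mul1n.
apply: leq_trans (class_mass_le_own (fun ab => c ab) margw).
rewrite /class_mass /class_size big_distrl /= big_mkcond leq_sum // => x _.
case: eqP => [<-|//]; rewrite (_ : [forall ab, _] = true) ?mul1n.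
  by rewrite prod_joint_occ leq_prod // => ab _; rewrite clsE.
by apply/forallP => ab; rewrite clsE.
Qed.

Lemma prod_sum_marginal m (y : 'I_m -> Y) (w : X * Y -> nat) :
  (forall b, \sum_a w (a, b) = occ y b) ->
  \prod_i \sum_a w (a, y i) = \prod_ab occ y ab.2 ^ w ab.
Proof.
move=> margw; under eq_bigr do rewrite margw.
rewrite (prod_occ y (occ y)) (eq_bigr (fun ab => occ y ab.2 ^ w (ab.1, ab.2))) => [|[]//].
rewrite -(pair_big xpredT xpredT (fun a b => occ y b ^ w (a, b))) exchange_big /=.
by apply: eq_bigr => b _; rewrite -expn_sum margw.
Qed.

End Counting.

Local Open Scope ring_scope.

Section TypeClassProbability.
Variables (R : realType) (X Y : finType) (P : X -> R) (n : nat).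
Variables (Q : X * Y -> R) (y : {ffun 'I_n -> Y}) (w : X * Y -> nat).
Hypotheses (n_gt0 : (0 < n)%N) (QE : forall ab, Q ab = (w ab)%:R / n%:R).
Hypothesis margQ : forall b, marginalY Q b = (occ y b)%:R / n%:R.

Let eq_div_n (k l : nat) : (k%:R / n%:R == l%:R / n%:R :> R) = (k == l).
Proof. by rewrite (inj_eq (mulIf _)) ?invr_eq0 ?pnatr_eq0 -?lt0n // eqr_nat. Qed.

Lemma sum_counts_marginal b : (\sum_a w (a, b))%N = occ y b.
Proof.
apply/eqP; rewrite -eq_div_n -margQ /marginalY natr_sum mulr_suml.
by apply/eqP/eq_bigr => a _; rewrite QE.
Qed.

Lemma cond_type_classE x :
  (x \in cond_type_class Q y) = [forall ab, joint_occ x y ab == w ab].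
Proof. by rewrite inE; apply: eq_forallb => ab; rewrite QE eq_div_n. Qed.

Lemma p_condE : p_cond P Q y = (class_size y w)%:R * \prod_ab P ab.1 ^+ w ab.
Proof.
rewrite /p_cond /class_size natr_sum mulr_suml big_mkcond; apply: eq_bigr => x _.
rewrite cond_type_classE; case: forallP => [xw|_]; last by rewrite mul0r.
rewrite mul1r (prod_occ (fun i => (x i, y i)) (fun ab => P ab.1)).
by apply: eq_bigr => ab _; rewrite -(eqP (xw ab)).
Qed.

Lemma Q_gt0 ab : (0 < Q ab) = (0 < w ab)%N.
Proof. by rewrite QE pmulr_lgt0 ?invr_gt0 ?ltr0n. Qed.

Lemma Q_le_marginal ab : Q ab <= marginalY Q ab.2.
Proof.
case: ab => a b; rewrite /marginalY (bigD1 a) //= lerDl sumr_ge0 // => a' _.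
by rewrite QE divr_ge0.
Qed.

Lemma p_cond_eq0 :
  [exists ab, (0 < Q ab) && (P ab.1 * marginalY Q ab.2 == 0)] -> p_cond P Q y = 0.
Proof.
case/existsP=> ab /andP[Qab]; rewrite mulf_eq0 => /orP[/eqP Pa|/eqP mb].
  by rewrite p_condE (bigD1 ab) //= Pa expr0n gtn_eqF -?Q_gt0 // mul0r mulr0.
by have := lt_le_trans Qab (Q_le_marginal ab); rewrite mb ltxx.
Qed.

Section FiniteRelativeEntropy.
Hypothesis P_ge0 : forall a, 0 <= P a.
Hypothesis abs_cont :
  ~~ [exists ab, (0 < Q ab) && (P ab.1 * marginalY Q ab.2 == 0)].

Lemma P_gt0_on_support ab : (0 < w ab)%N -> 0 < P ab.1.
Proof.
rewrite -Q_gt0 => Qab; rewrite lt_neqAle P_ge0 andbT eq_sym.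
apply: (contraNneq _ abs_cont) => Pa.
by apply/existsP; exists ab; rewrite Qab Pa mul0r eqxx.
Qed.

Lemma occ_gt0_on_support ab : (0 < w ab)%N -> (0 < occ y ab.2)%N.
Proof.
case: ab => a b wab; rewrite -sum_counts_marginal.
by rewrite (bigD1 a) //= ltn_addr.
Qed.

Local Notation D :=
  (\sum_(ab | 0 < Q ab) Q ab * ln (Q ab / (P ab.1 * marginalY Q ab.2))).

Lemma expR_relent :
  expR (- (n%:R * D)) = \prod_ab (P ab.1 * (occ y ab.2)%:R / (w ab)%:R) ^+ w ab.
Proof.
rewrite mulr_sumr -sumrN expR_sum [RHS](bigID (fun ab => 0 < Q ab)) /=.
rewrite [X in _ = _ * X]big1 ?mulr1 => [|ab]; last first.
  by rewrite Q_gt0 -eqn0Ngt => /eqP ->.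
apply: eq_bigr => ab; rewrite Q_gt0 => wab.
have [Pab occab] := (P_gt0_on_support wab, occ_gt0_on_support wab).
set ratio := P ab.1 * _ / _.
have ratio_gt0 : 0 < ratio by rewrite divr_gt0 ?mulr_gt0 ?ltr0n.
rewrite -(lnK (ratio_gt0 : ratio \in Num.pos)) -expRM_natl margQ QE.
have n_neq0 : n%:R != 0 :> R by rewrite pnatr_eq0 -lt0n.
have -> : (w ab)%:R / n%:R / (P ab.1 * ((occ y ab.2)%:R / n%:R)) = ratio^-1.
  by rewrite /ratio; field; rewrite ?n_neq0 ?gt_eqF ?ltr0n.
by congr expR; rewrite lnV ?posrE //; field.
Qed.

Lemma p_cond_expR_relent_bounds :
  p_cond P Q y <= expR (- (n%:R * D)) <= (n.+1 ^ (#|X| * #|Y|))%:R * p_cond P Q y.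
Proof.
set A := \prod_ab P ab.1 ^+ w ab.
set Z := (\prod_i \sum_a w (a, y i))%N; set K := (\prod_ab w ab ^ w ab)%N.
have A_ge0 : 0 <= A by rewrite prodr_ge0 // => ab _; rewrite exprn_ge0.
have K_gt0 : (0 < K)%N by rewrite prodn_gt0 // => ab; rewrite expn_gt0; case: (w ab).
have eE : expR (- (n%:R * D)) = A * Z%:R / K%:R.
  rewrite expR_relent /Z (prod_sum_marginal sum_counts_marginal) !natr_prod.
  by rewrite -prodfV -!big_split; apply: eq_bigr => ab _; rewrite !natrX !exprMn exprVn.
have [lo hi] : (class_mass y w w <= Z /\ Z <= n.+1 ^ (#|X| * #|Y|) * class_mass y w w)%N.
  by rewrite class_mass_le_prod_sum prod_sum_le_class_mass //; apply: sum_counts_marginal.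
move: lo hi; rewrite /class_mass -!(ler_nat R) !natrM -/K.
rewrite eE p_condE -/A ler_pdivlMr ?ler_pdivrMr ?ltr0n //; nra.
Qed.

Lemma p_cond_gt0 : 0 < p_cond P Q y.
Proof.
have S_gt0 := class_size_gt0 sum_counts_marginal.
rewrite p_condE mulr_gt0 ?ltr0n //.
apply: prodr_gt0 => ab _; case: (posnP (w ab)) => [->|wab]; first by rewrite expr0.
by rewrite exprn_gt0 // P_gt0_on_support.
Qed.

Lemma neg_ln_p_cond_bounds : n%:R * D <= - ln (p_cond P Q y)
  <= n%:R * D + (#|X| * #|Y|)%:R * ln n.+1%:R.
Proof.
have p_pos : p_cond P Q y \in Num.pos by rewrite posrE p_cond_gt0.
have C_pos : (n.+1 ^ (#|X| * #|Y|))%:R \in @Num.pos R by rewrite posrE ltr0n expn_gt0.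
have /andP[lo hi] := p_cond_expR_relent_bounds.
have e_pos : expR (- (n%:R * D)) \in Num.pos by rewrite posrE expR_gt0.
move: lo; rewrite -(ler_ln p_pos e_pos) expRK => lo.
move: hi; rewrite -(ler_ln e_pos (rpredM C_pos p_pos)) expRK lnM //.
rewrite natrX lnXn ?ltr0n // -mulr_natl; lra.
Qed.

End FiniteRelativeEntropy.

End TypeClassProbability.

Lemma half_frakY_expR (R : realType) (x p : R) : 0 < p ->
  2^-1 * frakY (expR x) p = expR (- Num.max (- ln p) ((x - ln p) / 2 + ln 2)).
Proof.
rewrite /frakY => p_gt0; have two_pos : (2 : R) \in Num.pos by rewrite posrE.
have -> : 2 * p = expR (ln 2 + ln p) by rewrite expRD !lnK ?posrE.
have -> : expR x `^ (- 2^-1) * p `^ 2^-1 = expR (- x / 2 + ln p / 2).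
  by rewrite -expRM /powR (gt_eqF p_gt0) -expRD; congr expR; field.
have half_expR (a : R) : 2^-1 * expR a = expR (a - ln 2).
  by rewrite expRD expRN lnK // mulrC.
have [ab|/ltW ba] := leP (ln 2 + ln p) (- x / 2 + ln p / 2).
  by rewrite min_l ?ler_expR // half_expR max_l; [congr expR|]; lra.
by rewrite min_r ?ler_expR // half_expR max_r; [congr expR|]; lra.
Qed.

Lemma rate_penalty_bounds (F : realFieldType) (n d r L k l : F) :
  0 < n -> 0 <= l -> n * d <= L <= n * d + k ->
  d + 2^-1 * Num.max 0 (r - d) <= n^-1 * Num.max L ((n * r + L) / 2 + l)
  <= d + 2^-1 * Num.max 0 (r - d) + (k / n + n^-1 * l).
Proof.
move=> n_gt0 l_ge0 /andP[lo hi].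
have : d <= L / n <= d + k / n.
  by rewrite ler_pdivlMr // ler_pdivrMr // mulrDl divfK ?gt_eqF // [d * n]mulrC lo hi.
have l'_ge0 : 0 <= n^-1 * l by rewrite mulr_ge0 // invr_ge0 ltW.
rewrite [n^-1 * _]maxr_pMr ?invr_ge0 ?(ltW n_gt0) // [n^-1 * L]mulrC.
have -> : n^-1 * ((n * r + L) / 2 + l) = (r + L / n) / 2 + n^-1 * l.
  by field; rewrite gt_eqF.
move: (L / n) (n^-1 * l) l'_ge0 => L' l' l'_ge0 /andP[lo' hi'].
case: (leP 0 (r - d)) => [h1|/ltW h1]; rewrite ?(max_r h1) ?(max_l h1);
  case: (leP L' ((r + L') / 2 + l')) => [h2|/ltW h2];
  rewrite ?(max_r h2) ?(max_l h2); lra.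
Qed.

Theorem lemma13 (R : realType) (X Y : finType) (P : X -> R) (Rate : R)
  (n : nat) (Q : X * Y -> R) (y : {ffun 'I_n -> Y}) :
  is_distr P -> 0 <= Rate -> (0 < n)%N -> is_ntype n Q ->
  (forall b, emp_type y b = marginalY Q b) ->
  let M := expR (n%:R * Rate) in
  let D := relent Q P in
  let lhs := ((- n%:R^-1)%:E * lne (2^-1 * frakY M (p_cond P Q y))%:E)%E in
  (D + (2^-1)%:E * maxe 0%E (Rate%:E - D) <= lhs)%E /\
  (lhs <= D + (2^-1)%:E * maxe 0%E (Rate%:E - D) + (kappa X Y n)%:E)%E.
Proof.
move=> [P_ge0 _] _ n_gt0 [_ /choice[w QE]] emp_marg M D lhs.
have margQ b : marginalY Q b = (occ y b)%:R / n%:R by rewrite -emp_marg.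
rewrite /lhs /D /relent; case: ifPn => [not_abs_cont|abs_cont].
  rewrite (p_cond_eq0 y n_gt0 QE) // /frakY mulr0.
  rewrite powR0 ?invr_eq0 ?pnatr_eq0 // mulr0 minxx mulr0.
  rewrite /= lexx mulrNy sgrN gtr0_sg ?invr_gt0 ?ltr0n // mulN1e /=.
  by rewrite addeNy maxeNy mule0 adde0 addye //; split; apply: leey.
have p_gt0 := p_cond_gt0 n_gt0 QE margQ P_ge0 abs_cont.
rewrite half_frakY_expR // lne_EFin ?expR_gt0 // expRK -EFinM mulrNN.
rewrite -EFinB -EFin_max -EFinM -!EFinD !lee_fin /kappa mulrAC; apply/andP.
apply: rate_penalty_bounds; rewrite ?ltr0n ?ln_ge0 ?ler1n //.
exact: neg_ln_p_cond_bounds.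
Qed.
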